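(* Let $G=(V,E,C,\ell)$ be an edge-labeled hypergraph with maximum hyperedge size $r$. Construct an undirected weighted graph $G'$ on node set $V'=V\cup\{v_c: c\in C\}$ (one new terminal node per category) as follows: for each hyperedge $e\in E$, add a clique on the nodes of $e$ together with the terminal $v_{\ell(e)}$, each clique edge having weight $1/|e|$; weights of overlapping edges are added. For a clustering $Y:V\to C$, let $\mathrm{MultiwayCut}(Y)$ be the total weight of edges of $G'$ whose endpoints lie in different parts of the partition of $V'$ into the $|C|$ sets $\{v_c\}\cup Y^{-1}(c)$, $c\in C$. Then for every clustering $Y$, \[ \mathrm{CatEdgeClus}(Y)\le \mathrm{MultiwayCut}(Y)\le \frac{r+1}{2}\,\mathrm{CatEdgeClus}(Y). \]
   Context: An edge-labeled hypergraph $G=(V,E,C,\ell)$ consists of a finite node set $V$, a finite collection $E$ of hyperedges (nonempty subsets of $V$), a finite set $C$ of categories, and a labeling $\ell:E\to C$. A clustering is a map $Y:V\to C$. For $e\in E$, $m_Y(e)=1$ if $Y[i]\neq\ell(e)$ for some $i\in e$, and $m_Y(e)=0$ otherwise; $\mathrm{CatEdgeClus}(Y)=\sum_{e\in E}m_Y(e)$. *)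

From HB Require Import structures.
From mathcomp Require Import all_boot all_order all_algebra.
Set Implicit Arguments. Unset Strict Implicit. Unset Printing Implicit Defensive.
Import Order.TTheory GRing.Theory Num.Theory.
Local Open Scope ring_scope.

(* Edge-labeled hypergraph: node type V, category type C, hyperedges indexed
   by a finite type I (so repeated hyperedges are allowed), hyperedge
   i has node set e i and label l i. *)

Definition mistake (V C : finType) (e : {set V}) (c : C) (Y : V -> C) : bool :=
  [exists v in e, Y v != c].

Definition CatEdgeClus (V C I : finType) (e : I -> {set V}) (l : I -> C)
  (Y : V -> C) : nat :=
  \sum_(i : I) mistake (e i) (l i) Y.

Definition max_edge_size (V I : finType) (e : I -> {set V}) : nat :=
  \max_(i : I) #|e i|.

Definition Vp (V C : finType) : finType := (V + C)%type.

Definition clique_nodes (V C : finType) (e : {set V}) (c : C) : {set Vp V C} :=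
  (@inl V C) @: e :|: [set inr c].

Definition weightG' (V C I : finType) (e : I -> {set V}) (l : I -> C)
  (x y : Vp V C) : rat :=
  \sum_(i : I | [&& x != y, x \in clique_nodes (e i) (l i)
                 & y \in clique_nodes (e i) (l i)]) (#|e i|%:R)^-1.

Definition part (V C : finType) (Y : V -> C) (x : Vp V C) : C :=
  match x with inl v => Y v | inr c => c end.

(* MultiwayCut(Y): total weight of edges of G' whose endpoints are in
   different parts; each unordered edge {x,y} is counted once, hence the
   factor 1/2 over ordered pairs (weights are symmetric, zero on the diagonal). *)
Definition MultiwayCut (V C I : finType) (e : I -> {set V}) (l : I -> C)
  (Y : V -> C) : rat :=
  2^-1 * \sum_(x : Vp V C) \sum_(y : Vp V C | part Y x != part Y y)
           weightG' e l x y.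

From HB Require Import structures.
From mathcomp Require Import all_boot all_order all_algebra.
From mathcomp Require Import zify.
Set Implicit Arguments. Unset Strict Implicit. Unset Printing Implicit Defensive.
Import Order.TTheory GRing.Theory Num.Theory.
Local Open Scope ring_scope.

(* Both sides split over hyperedges. The clique of a hyperedge [e] has
   [k = |e| + 1] nodes and edge weight [1/|e|]. If [e] is not a mistake, all its
   nodes lie in the part of [v_l(e)] and nothing is cut. Otherwise the clique is
   split into a class of size [a] and a nonempty rest, so at least
   [a (k - a) >= k - 1 = |e|] edges are cut (weight >= 1) and at most all
   [k (k - 1) / 2] of them (weight <= (|e| + 1) / 2 <= (r + 1) / 2). *)

Section CutPairs.

Variables (T C : finType) (p : T -> C).

(* Ordered pairs: each cut edge of the clique on [K] is counted twice. *)
Definition cut_pairs (K : {set T}) : nat :=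
  \sum_(x in K) #|[set y in K | p y != p x]|.

Lemma cut_pairs_const (K : {set T}) (c : C) :
  {in K, forall x, p x = c} -> cut_pairs K = 0%N.
Proof.
move=> pK; apply: big1 => x xK; apply/eqP; rewrite cards_eq0; apply/eqP/setP => y.
by rewrite !inE; case: (boolP (y \in K)) => //= yK; rewrite pK // pK // eqxx.
Qed.

Lemma cut_pairs_le (K : {set T}) : (cut_pairs K <= #|K| * (#|K| - 1))%N.
Proof.
rewrite -sum_nat_const; apply: leq_sum => x xK.
rewrite (cardsD1 x K) xK add1n subn1 /=; apply: subset_leq_card.
apply/subsetP => y; rewrite !inE => /andP[yK].
by rewrite yK andbT; apply: contraNneq => ->.
Qed.

Lemma cut_pairs_ge_class (K : {set T}) (c : C) :
  (2 * (#|[set y in K | p y == c]| * #|K :\: [set y in K | p y == c]|)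
    <= cut_pairs K)%N.
Proof.
set A := [set y in K | p y == c].
have AK : A \subset K by apply/subsetP => y; rewrite inE => /andP[].
rewrite /cut_pairs (big_setID A) /= (setIidPr AK) mul2n -addnn {2}mulnC.
apply: leq_add; rewrite -sum_nat_const; apply: leq_sum => x.
  rewrite inE => /andP[_ /eqP px]; apply: subset_leq_card; apply/subsetP => y.
  by rewrite !inE px; case: (y \in K); rewrite ?andbT.
rewrite !inE => /andP[xNA xK]; apply: subset_leq_card; apply/subsetP => y.
rewrite !inE => /andP[yK /eqP py]; rewrite yK /=.
by apply: contraNneq xNA => <-; rewrite xK py eqxx.
Qed.

Lemma cut_pairs_ge (K : {set T}) (t u : T) :
  t \in K -> u \in K -> p t != p u -> (2 * (#|K| - 1) <= cut_pairs K)%N.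
Proof.
move=> tK uK ptu; apply: leq_trans (cut_pairs_ge_class K (p t)).
set A := [set y in K | p y == p t].
have AK : A \subset K by apply/subsetP => y; rewrite inE => /andP[].
have a_gt0 : (0 < #|A|)%N by apply/card_gt0P; exists t; rewrite inE tK eqxx.
have b_gt0 : (0 < #|K :\: A|)%N.
  by apply/card_gt0P; exists u; rewrite !inE uK eq_sym ptu.
have := cardsID A K; rewrite (setIidPr AK) leq_mul2l /=; nia.
Qed.

Lemma cut_pairsE (K : {set T}) :
  cut_pairs K = (\sum_x \sum_(y | p x != p y) ((x \in K) && (y \in K)))%N.
Proof.
rewrite /cut_pairs big_mkcond; apply: eq_bigr => x _.
case: (boolP (x \in K)) => xK /=; last by rewrite big1.
rewrite -sum1_card big_mkcond [RHS]big_mkcond; apply: eq_bigr => y _.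
by rewrite !inE eq_sym; case: (y \in K); case: (p x != p y).
Qed.

End CutPairs.

Section Clique.

Variables (V C : finType) (e : {set V}) (c : C) (Y : V -> C).

Lemma card_clique_nodes : #|clique_nodes e c| = #|e|.+1.
Proof.
rewrite /clique_nodes setUC cardsU1 card_imset; last exact: inl_inj.
by have /negbTE -> : inr c \notin [set inl x | x in e] by apply/imsetP => -[].
Qed.

Lemma cut_pairs_clique_mistake : mistake e c Y ->
  (2 * #|e| <= cut_pairs (part Y) (clique_nodes e c) <= #|e|.+1 * #|e|)%N.
Proof.
case/existsP=> u /andP[ue Yu].
have cK : inr c \in clique_nodes e c by rewrite !inE eqxx orbT.
have uK : inl u \in clique_nodes e c by rewrite in_setU imset_f.
have := cut_pairs_ge (p := part Y) cK uK; rewrite /= eq_sym => /(_ Yu) lo.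
have hi := cut_pairs_le (part Y) (clique_nodes e c).
by rewrite card_clique_nodes subn1 /= in lo hi; rewrite lo hi.
Qed.

Lemma cut_pairs_clique_no_mistake : ~~ mistake e c Y ->
  cut_pairs (part Y) (clique_nodes e c) = 0%N.
Proof.
move=> noMistake; apply: (cut_pairs_const (c := c)) => x.
rewrite !inE => /orP[/imsetP[v ve ->] | /eqP ->] //=.
by apply/eqP; apply: contraNT noMistake => Yv; apply/existsP; exists v; rewrite ve.
Qed.

Definition clique_cut : rat :=
  (cut_pairs (part Y) (clique_nodes e c))%:R / (2 * #|e|)%:R.

Lemma clique_cut_bounds (r : nat) : e != set0 -> (#|e| <= r)%N ->
  (mistake e c Y)%:R <= clique_cut <= (r.+1)%:R / 2 * (mistake e c Y)%:R.
Proof.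
rewrite -card_gt0 => e_gt0 le_er; rewrite /clique_cut.
have twoe_gt0 : 0 < (2 * #|e|)%:R :> rat by rewrite ltr0n muln_gt0.
have [m|noM] := boolP (mistake e c Y); last first.
  by rewrite cut_pairs_clique_no_mistake // !mulr0 mul0r lexx.
have /andP[lo hi] := cut_pairs_clique_mistake m.
rewrite mulr1 ler_pdivlMr // ler_pdivrMr // mul1r ler_nat lo /=.
apply: le_trans (_ : (#|e|.+1 * #|e|)%:R <= _); first by rewrite ler_nat.
rewrite [(2 * _)%:R]natrM mulrA divfK ?pnatr_eq0 // -natrM.
by rewrite ler_nat leq_mul2r ltnS le_er orbT.
Qed.

End Clique.

Lemma MultiwayCut_sum_cliques (V C I : finType) (e : I -> {set V}) (l : I -> C)
  (Y : V -> C) :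
  MultiwayCut e l Y = \sum_i clique_cut (e i) (l i) Y.
Proof.
pose K i := clique_nodes (e i) (l i); pose w i := (#|e i|%:R : rat)^-1.
have weight_cut x y : part Y x != part Y y ->
    weightG' e l x y = \sum_i w i * ((x \in K i) && (y \in K i))%:R.
  move=> pxy; have /negbTE xy : x != y by apply: contraNneq pxy => ->.
  rewrite /weightG' big_mkcond; apply: eq_bigr => i _.
  by rewrite xy /=; case: (_ && _); rewrite ?mulr1 ?mulr0.
rewrite /MultiwayCut.
under eq_bigr => x _ do under eq_bigr => y pxy do rewrite weight_cut //.
under eq_bigr do rewrite exchange_big.
rewrite exchange_big mulr_sumr; apply: eq_bigr => i _.
rewrite /clique_cut cut_pairsE natrM invfM.
under eq_bigr do rewrite -mulr_sumr.
rewrite -mulr_sumr natr_sum mulrA mulrC; congr (_ * _).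
by apply: eq_bigr => x _; rewrite natr_sum.
Qed.

Theorem mainTheorem7 (V C I : finType) (e : I -> {set V}) (l : I -> C)
  (He : forall i : I, e i != set0) (Y : V -> C) :
  let r := max_edge_size e in
  (CatEdgeClus e l Y)%:R <= MultiwayCut e l Y /\
  MultiwayCut e l Y <= ((r.+1)%:R / 2) * (CatEdgeClus e l Y)%:R.
Proof.
move=> r; have le_er i : (#|e i| <= r)%N by apply: leq_bigmax.
rewrite MultiwayCut_sum_cliques /CatEdgeClus natr_sum mulr_sumr.
split; apply: ler_sum => i _;
  by case/andP: (clique_cut_bounds (l i) Y (He i) (le_er i)).
Qed.
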